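(* For all $0<b\le B\le1$ and every integer $n\ge1$, $$\textsc{PoF-Reward-Submodular}(b,B)=\textsc{PoF-Welfare-Submodular}(b,B)=\min\big(\lceil 2B/b\rceil-1,\,n\big)\le\min(2B/b,\,n).$$
   Context: An instance $\langle A,f,c\rangle$ consists of a finite set $A$ of agents, a monotone nondecreasing $f:2^A\to[0,1]$, and costs $c_i\ge0$. For $S\subseteq A$, $i\in S$: $f_S(i)=f(S)-f(S\setminus\{i\})$; $p(S)=\sum_{i\in S}c_i/f_S(i)$ (conventions: $0$ if $c_i=0=f_S(i)$, $\infty$ if $c_i>0=f_S(i)$). $f$ is submodular if $f_S(i)\ge f_{S'}(i)$ whenever $S\subseteq S'$, $i\in S$. For an objective $\varphi$ (assigning to each instance and $S\subseteq A$ a real $\varphi(S)$), $\textsc{Max-}\varphi(B)=\max\{\varphi(S):p(S)\le B\}$ and, for an instance, $\textsc{PoF-}\varphi(b,B)=\textsc{Max-}\varphi(B)/\textsc{Max-}\varphi(b)$. The reward objective is $\varphi(S)=f(S)$ and the welfare objective is $\varphi(S)=f(S)-\sum_{i\in S}c_i$. $\textsc{PoF-Reward-Submodular}(b,B)$ (resp. $\textsc{PoF-Welfare-Submodular}(b,B)$) is the supremum of $\textsc{PoF-}\varphi(b,B)$ for the reward (resp. welfare) objective over all instances with submodular $f$, at most $n$ agents, and $\max_{i\in A}p(\{i\})\le b$. *)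

From mathcomp Require Import all_boot all_order all_algebra.
From mathcomp Require Import reals constructive_ereal.
Set Implicit Arguments. Unset Strict Implicit. Unset Printing Implicit Defensive.
Import Order.TTheory GRing.Theory Num.Theory.
Local Open Scope ring_scope.

Section Defs.
Variable R : realType.

Definition marg (A : finType) (f : {set A} -> R) (S : {set A}) (i : A) : R :=
  f S - f (S :\ i).

Definition price (A : finType) (f : {set A} -> R) (c : A -> R) (S : {set A}) : \bar R :=
  (\sum_(i in S)
     (if (marg f S i == 0)%R then (if (c i == 0)%R then 0 else +oo) else (c i / marg f S i)%:E))%E.

Definition monotone_set (A : finType) (f : {set A} -> R) :=
  forall S T : {set A}, S \subset T -> f S <= f T.

Definition unit_valued (A : finType) (f : {set A} -> R) :=
  forall S : {set A}, 0 <= f S <= 1.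

Definition submodular (A : finType) (f : {set A} -> R) :=
  forall (S S' : {set A}) (i : A), S \subset S' -> i \in S -> marg f S' i <= marg f S i.

Definition objective := forall (A : finType), ({set A} -> R) -> (A -> R) -> {set A} -> R.

Definition reward : objective := fun A f c S => f S.
Definition welfare : objective := fun A f c S => f S - \sum_(i in S) c i.

(* Max-phi(B) = max { phi(S) : p(S) <= B }  (the empty set is always feasible) *)
Definition MaxPhi (phi : objective) (A : finType) (f : {set A} -> R) (c : A -> R) (B : R) : R :=
  \big[Num.max/phi A f c set0]_(S : {set A} | (price f c S <= B%:E)%E) phi A f c S.

(* the set of values PoF-phi(b,B) over all valid submodular instances with at most n
   agents and max_i p({i}) <= b (instances with Max-phi(b) = 0, i.e. 0/0, are excluded) *)
Definition PoF_values (phi : objective) (n : nat) (b B : R) : R -> Prop :=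
  fun r => exists (A : finType) (f : {set A} -> R) (c : A -> R),
    [/\ (#|A| <= n)%N, unit_valued f, monotone_set f & submodular f] /\
    [/\ (forall i, 0 <= c i),
        (forall i, (price f c [set i] <= b%:E)%E),
        0 < MaxPhi phi f c b &
        r = MaxPhi phi f c B / MaxPhi phi f c b].

Definition is_sup (X : R -> Prop) (v : R) :=
  (forall r, X r -> r <= v) /\ (forall w, w < v -> exists2 r, X r & w < r).

End Defs.

From mathcomp Require Import all_boot all_order all_algebra.
From mathcomp Require Import reals constructive_ereal.
From mathcomp Require Import zify ring lra.
Import Order.TTheory GRing.Theory Num.Theory.
Local Open Scope ring_scope.
Set Implicit Arguments. Unset Strict Implicit. Unset Printing Implicit Defensive.

(* Upper bound: fix S with p(S) <= B and give each i in S the share c_i / f_S(i), so that the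
   shares of S sum to p(S) <= B.  Pack S first-fit into groups that are singletons or have
   total share at most b; any two groups together exceed b, so k >= 2 groups satisfy
   k b < 2 B, i.e. k <= ceil(2B/b) - 1, and k <= |S| <= n.  By submodularity each group costs
   at most its total share, hence is affordable with budget b, and phi(S) - phi(0) is at most
   the sum over the groups of phi(G) - phi(0); this gives phi(S) <= k Max-phi(b).
   Lower bound: k identical agents with f(S) = |S|/k and cost beta/k, where
   b/2 < beta <= b and k beta <= B: budget b buys one agent, budget B buys all k. *)

Definition diminishing_returns (R : numDomainType) (A : finType) (phi : {set A} -> R) :=
  forall (G T : {set A}) (x : A), G \subset T -> x \notin T ->
    phi (x |: T) - phi T <= phi (x |: G) - phi G.

Lemma submodular_diminishing_returns (R : realType) (A : finType) (f : {set A} -> R) :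
  submodular f -> diminishing_returns f.
Proof.
move=> f_sub G T x GT xT.
have xG : x \notin G by apply: contra xT; apply: (subsetP GT).
by have := f_sub _ _ x (setUS [set x] GT) (setU11 x G); rewrite /marg !setU1K.
Qed.

Lemma diminishing_returnsB_modular (R : realDomainType) (A : finType)
    (phi : {set A} -> R) (c : A -> R) :
  diminishing_returns phi -> diminishing_returns (fun S => phi S - \sum_(i in S) c i).
Proof.
move=> phi_dr G T x GT xT.
have xG : x \notin G by apply: contra xT; apply: (subsetP GT).
rewrite !big_setU1 //=; have := phi_dr G T x GT xT; lra.
Qed.

Lemma sumr_const_seq (R : nmodType) (T : Type) (l : seq T) (a : R) :
  \sum_(x <- l) a = a *+ size l.
Proof. by rewrite big_const_seq count_predT iter_addr_0. Qed.

Lemma open_group_bound (R : realFieldType) (k : nat) (b w S : R) :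
  (0 < k)%N -> 0 <= w -> k%:R * (b - w) < S ->
  ((2 <= k)%N -> k%:R * b < 2 * S) -> k.+1%:R * b < 2 * (w + S).
Proof.
move=> k_gt0 w_ge0 sep pair; rewrite -natr1 mulrDl mul1r.
have k_ge1 : 1 <= k%:R :> R by rewrite ler1n.
have [small_w|big_w] := lerP (2 * w) b.
  have : 0 <= (k%:R - 1) * (b - 2 * w) by apply: mulr_ge0; lra.
  nra.
have [k_le1|k_ge2] := leqP k 1.
  have k1 : k = 1%N by lia.
  by move: sep; rewrite k1 mul1r; lra.
by have := pair k_ge2; lra.
Qed.

Section Packing.
Variables (R : realFieldType) (A : finType) (w : A -> R) (phi : {set A} -> R) (b : R).
Hypothesis w_ge0 : forall i, 0 <= w i.
Hypothesis phi_dr : diminishing_returns phi.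

Definition weight (G : {set A}) : R := \sum_(i in G) w i.

(* The last clause is the first-fit invariant: any two groups together weigh more than b. *)
Definition packing (T : {set A}) (Gs : seq {set A}) : Prop :=
  [/\ forall G, G \in Gs -> G \subset T /\ ((#|G| == 1)%N || (weight G <= b)),
      weight T = \sum_(G <- Gs) weight G,
      phi T - phi set0 <= \sum_(G <- Gs) (phi G - phi set0),
      (size Gs <= #|T|)%N &
      (2 <= size Gs)%N -> (size Gs)%:R * b < 2 * \sum_(G <- Gs) weight G].

Lemma packing0 : packing set0 [::].
Proof. by split=> //; rewrite ?subrr /weight ?big_set0 big_nil. Qed.

Lemma weightU1 (G : {set A}) x : x \notin G -> weight (x |: G) = w x + weight G.
Proof. exact: big_setU1. Qed.

Lemma packing_merge T Gs G x : packing T Gs -> x \notin T -> G \in Gs ->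
  weight G + w x <= b -> packing (x |: T) ((x |: G) :: rem G Gs).
Proof.
move=> [groups_ok weightT phiT sizeGs pairs] xT GGs fits.
have [GT _] := groups_ok G GGs.
have xG : x \notin G by apply: contra xT; apply: (subsetP GT).
have sumG (F : {set A} -> R) : \sum_(G0 <- Gs) F G0 = F G + \sum_(G0 <- rem G Gs) F G0.
  by rewrite (perm_big _ (perm_to_rem GGs)) big_cons.
rewrite sumG in weightT; rewrite sumG in phiT; rewrite sumG in pairs.
have size_Gs : size Gs = (size (rem G Gs)).+1 := perm_size (perm_to_rem GGs).
rewrite size_Gs in sizeGs pairs.
split; rewrite ?big_cons ?weightU1 ?cardsU1 ?xT //=.
- move=> G'; rewrite inE => /orP[/eqP ->|G'Gs].
    by rewrite setUS // weightU1 //; split=> //; apply/orP; right; lra.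
  have [G'T ->] := groups_ok G' (mem_rem G'Gs).
  by rewrite (subset_trans G'T) ?subsetUr.
- lra.
- by have := phi_dr GT xT; lra.
- by rewrite add1n ltnW.
- by move=> /pairs; have := w_ge0 x; lra.
Qed.

Lemma packing_open T Gs x : packing T Gs -> x \notin T ->
  (forall G, G \in Gs -> b < weight G + w x) -> packing (x |: T) ([set x] :: Gs).
Proof.
move=> [groups_ok weightT phiT sizeGs pairs] xT no_fit.
have weight1 : weight [set x] = w x by rewrite /weight big_set1.
split; rewrite ?big_cons ?weightU1 ?cardsU1 ?xT //=.
- move=> G; rewrite inE => /orP[/eqP ->|GGs]; first by rewrite sub1set setU11 cards1.
  have [GT ->] := groups_ok G GGs.
  by rewrite (subset_trans GT) ?subsetUr.
- by rewrite weight1 weightT.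
- by have := phi_dr (sub0set T) xT; rewrite setU0; lra.
- rewrite weight1; case: Gs {groups_ok weightT phiT sizeGs} pairs no_fit => [//|G l] pairs no_fit _.
  apply: open_group_bound => //.
  rewrite mulr_natl -sumr_const_seq !big_seq.
  apply: ltr_sum => [|G0 G0l]; first by apply/hasP; exists G; rewrite mem_head.
  by have := no_fit G0 G0l; lra.
Qed.

Lemma packing_exists T : exists Gs, packing T Gs.
Proof.
rewrite -[T]set_enum; elim: (enum T) => [|x s [Gs packed]].
  have -> : [set x in [::]] = set0 :> {set A} by apply/setP => y; rewrite !inE.
  by exists [::]; exact: packing0.
have -> : [set y in x :: s] = x |: [set y in s] by apply/setP => y; rewrite !inE.
have [xs|xs] := boolP (x \in [set y in s]); first by exists Gs; rewrite (setUidPr _) ?sub1set.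
have [/hasP[G GGs fits]|/hasPn no_fit] := boolP (has (fun G => weight G + w x <= b) Gs).
  by exists ((x |: G) :: rem G Gs); apply: packing_merge.
exists ([set x] :: Gs); apply: packing_open => // G GGs.
by rewrite ltNge; apply: no_fit.
Qed.

End Packing.

Section PriceShares.
Variables (R : realType) (A : finType) (f : {set A} -> R) (c : A -> R).
Hypotheses (f_mono : monotone_set f) (f_sub : submodular f) (c_ge0 : forall i, 0 <= c i).

Lemma marg_ge0 S i : 0 <= marg f S i.
Proof. by rewrite subr_ge0 f_mono ?subD1set. Qed.

Definition price_share (S : {set A}) (i : A) : R :=
  if marg f S i == 0 then 0 else c i / marg f S i.

Lemma price_share_ge0 S i : 0 <= price_share S i.
Proof. by rewrite /price_share; case: eqP => // _; rewrite divr_ge0 ?marg_ge0. Qed.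

Lemma cost_eq0_of_marg_eq0 S i : (price f c S < +oo)%E -> i \in S ->
  marg f S i = 0 -> c i = 0.
Proof.
move=> S_fin iS marg0; apply/eqP; apply: contraTT S_fin => ci_neq0.
rewrite /price (bigD1 i) //= marg0 eqxx (negbTE ci_neq0) addye ?ltxx //.
rewrite gt_eqF // (lt_le_trans (ltNyr 0%R)) //; apply: sume_ge0 => j _.
case: eqP => _; first by case: eqP => _; rewrite ?le0y.
by apply: lee_tofin; rewrite divr_ge0 ?marg_ge0.
Qed.

Lemma price_sum_shares S : (price f c S < +oo)%E ->
  price f c S = (\sum_(i in S) price_share S i)%:E.
Proof.
move=> S_fin; rewrite -sumEFin; apply: eq_bigr => i iS; rewrite /price_share.
by case: eqP => // marg0; rewrite (cost_eq0_of_marg_eq0 S_fin iS marg0) eqxx.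
Qed.

Lemma price_subset_le_shares (S G : {set A}) : (price f c S < +oo)%E -> G \subset S ->
  (price f c G <= (\sum_(i in G) price_share S i)%:E)%E.
Proof.
move=> S_fin GS; rewrite /price -sumEFin; apply: lee_sum => i iG.
have iS : i \in S by apply: (subsetP GS).
rewrite /price_share; have [marg0|margS_neq0] := eqVneq (marg f S i) 0.
  by rewrite (cost_eq0_of_marg_eq0 S_fin iS marg0) eqxx mul0r; case: ifP.
have margS_gt0 : 0 < marg f S i by rewrite lt_neqAle eq_sym margS_neq0 marg_ge0.
have margSG : marg f S i <= marg f G i by exact: f_sub.
rewrite gt_eqF ?(lt_le_trans margS_gt0) // lee_fin ler_wpM2l //.
by rewrite lef_pV2 ?posrE // (lt_le_trans margS_gt0).
Qed.

(* Groups of weight at most b are affordable since prices only drop on subsets of S. *)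
Lemma feasible_set_packing (phi : {set A} -> R) (b B M : R) (S : {set A}) :
  diminishing_returns phi -> (forall i, (price f c [set i] <= b%:E)%E) ->
  (forall G, (price f c G <= b%:E)%E -> phi G <= M) -> (price f c S <= B%:E)%E ->
  exists k : nat, [/\ (k <= #|S|)%N, (2 <= k)%N -> k%:R * b < 2 * B &
    phi S - phi set0 <= k%:R * (M - phi set0)].
Proof.
move=> phi_dr singleton_ok affordable_le S_le.
have S_fin : (price f c S < +oo)%E by exact: le_lt_trans S_le (ltry _).
have [Gs [groups_ok weightS phiS sizeGs pairs]] :=
  packing_exists b (price_share_ge0 S) phi_dr S.
have sharesS : weight (price_share S) S <= B by rewrite -lee_fin -price_sum_shares.
exists (size Gs); split => // [/pairs|]; first by rewrite -weightS; lra.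
apply: (le_trans phiS); rewrite mulr_natl -sumr_const_seq !big_seq.
apply: ler_sum => G GGs; rewrite lerD2r; apply: affordable_le.
have [GS /orP[/cards1P[i ->]|weightG]] := groups_ok G GGs; first exact: singleton_ok.
by apply: (le_trans (price_subset_le_shares S_fin GS)); rewrite lee_fin.
Qed.

End PriceShares.

Definition pof_bound (R : realType) (b B : R) (n : nat) : R :=
  Num.min ((Num.ceil (2 * B / b) - 1)%:~R) n%:R.

Section PofBound.
Variables (R : realType) (b B : R) (n : nat).
Hypotheses (b_gt0 : 0 < b) (b_le_B : b <= B) (n_ge1 : (1 <= n)%N).

Lemma ceil_ratio_ge2 : (2 <= Num.ceil (2 * B / b))%R.
Proof.
suff : (1 < Num.ceil (2 * B / b))%R by lia.
by rewrite ceil_gt_int ltr_pdivlMr // mul1r; move: b_gt0 b_le_B; lra.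
Qed.

Lemma nat_le_pof_bound (k : nat) : (k <= n)%N ->
  ((2 <= k)%N -> k%:R * b < 2 * B) -> k%:R <= pof_bound b B n.
Proof.
move=> k_le_n k_pairs; rewrite le_min ler_nat k_le_n andbT.
suff : (k%:Z <= Num.ceil (2 * B / b) - 1)%R by rewrite -(ler_int R).
have [k_le1|k_ge2] := leqP k 1; first by have := ceil_ratio_ge2; lia.
suff : (k%:Z < Num.ceil (2 * B / b))%R by lia.
by rewrite ceil_gt_int ltr_pdivlMr //; exact: k_pairs.
Qed.

Lemma pof_bound_ge1 : 1 <= pof_bound b B n.
Proof. by apply: (nat_le_pof_bound (k := 1)). Qed.

Lemma pof_bound_le : pof_bound b B n <= Num.min (2 * B / b) n%:R.
Proof. by rewrite le_min !ge_min lexx orbT andbT ltW ?ceilB1_lt. Qed.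

Lemma pof_bound_nat : exists2 k : nat, (0 < k)%N &
  [/\ (k <= n)%N, k%:R = pof_bound b B n & k%:R * b < 2 * B].
Proof.
have ceil_ge2 := ceil_ratio_ge2.
pose m := `|Num.ceil (2 * B / b) - 1|%N.
have mE : (m%:Z = Num.ceil (2 * B / b) - 1)%R by rewrite /m; lia.
exists (minn m n); first by rewrite leq_min n_ge1 andbT; lia.
split; first exact: geq_minr.
  by rewrite /pof_bound -mE -[(m%:Z)%:~R]/(m%:R : R) -natr_min minEnat.
rewrite -ltr_pdivlMr // (le_lt_trans _ (ceilB1_lt _)) // -mE.
by rewrite -[(m%:Z)%:~R]/(m%:R : R) ler_nat geq_minl.
Qed.

End PofBound.

Lemma le_mul_of_gain_bound (R : realFieldType) (k : nat) (v y0 y M : R) :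
  0 <= y0 <= M -> 1 <= v -> k%:R <= v -> y - y0 <= k%:R * (M - y0) -> y <= v * M.
Proof.
move=> /andP[y0_ge0 y0_le_M] v_ge1 k_le_v y_le.
have [k0|k_gt0] := posnP k; first by move: y_le; rewrite k0 mul0r; nra.
have k_ge1 : 1 <= k%:R :> R by rewrite ler1n.
have : 0 <= (k%:R - 1) * y0 by apply: mulr_ge0; lra.
have : 0 <= (v - k%:R) * M by apply: mulr_ge0; lra.
nra.
Qed.

Lemma PoF_values_le_pof_bound (R : realType) (phi : objective R) (n : nat) (b B : R) :
  0 < b -> b <= B -> (1 <= n)%N ->
  (forall (A : finType) (f : {set A} -> R) c,
     submodular f -> diminishing_returns (phi A f c)) ->
  (forall (A : finType) (f : {set A} -> R) c, unit_valued f -> 0 <= phi A f c set0) ->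
  forall r, PoF_values phi n b B r -> r <= pof_bound b B n.
Proof.
move=> b_gt0 b_le_B n_ge1 phi_dr phi0_ge0 _
  [A [f [c [[cardA f_unit f_mono f_sub] [c_ge0 singleton_ok M_gt0 ->]]]]].
set M := MaxPhi phi f c b in M_gt0 *; rewrite ler_pdivrMr //.
have affordable_le G : (price f c G <= b%:E)%E -> phi A f c G <= M.
  exact: le_bigmax_cond.
have phi0_le : phi A f c set0 <= M.
  by rewrite affordable_le // /price big_set0 lee_fin ltW.
have phi0_range : 0 <= phi A f c set0 <= M by rewrite phi0_le phi0_ge0.
have v_ge1 := pof_bound_ge1 b_gt0 b_le_B n_ge1.
apply: bigmax_le => [|S S_le]; first by move: phi0_range v_ge1 => /andP[]; nra.
have [k [k_le_S k_pairs phiS]] :=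
  feasible_set_packing f_mono f_sub c_ge0 (phi_dr A f c f_sub) singleton_ok affordable_le S_le.
apply: le_mul_of_gain_bound phi0_range v_ge1 _ phiS.
apply: nat_le_pof_bound => //.
by rewrite (leq_trans k_le_S) // (leq_trans _ cardA) // max_card.
Qed.

Section UniformInstance.
Variables (R : realType) (k : nat) (beta : R).
Hypotheses (k_gt0 : (0 < k)%N) (beta_gt0 : 0 < beta).

Definition uniform_reward (S : {set 'I_k}) : R := #|S|%:R / k%:R.
Definition uniform_cost (i : 'I_k) : R := beta / k%:R.

Let k_neq0 : k%:R != 0 :> R.
Proof. by rewrite pnatr_eq0 -lt0n. Qed.

Lemma marg_uniform (S : {set 'I_k}) i : i \in S -> marg uniform_reward S i = k%:R^-1.
Proof. by move=> iS; rewrite /marg /uniform_reward (cardsD1 i S) iS /= natrD; ring. Qed.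

Lemma price_uniform (S : {set 'I_k}) :
  price uniform_reward uniform_cost S = (#|S|%:R * beta)%:E.
Proof.
rewrite /price (eq_bigr (fun _ => beta%:E)) ?sumEFin ?sumr_const ?mulr_natl // => i iS.
by rewrite marg_uniform // invr_eq0 (negbTE k_neq0) /uniform_cost invrK mulfVK ?k_neq0.
Qed.

Lemma uniform_reward_valid :
  [/\ unit_valued uniform_reward, monotone_set uniform_reward & submodular uniform_reward].
Proof.
have k_gt0R : 0 < k%:R :> R by rewrite ltr0n.
split.
- move=> S; rewrite divr_ge0 ?ler0n //= ler_pdivrMr // mul1r ler_nat.
  by rewrite -[X in (_ <= X)%N]card_ord max_card.
- by move=> S T ST; rewrite ler_pM2r ?invr_gt0 // ler_nat subset_leq_card.
- by move=> S S' i SS' iS; rewrite !marg_uniform // (subsetP SS').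
Qed.

Lemma card_ord_prefix (m : nat) (m_le_k : (m <= k)%N) :
  #|[set widen_ord m_le_k i | i : 'I_m]| = m.
Proof. by rewrite card_imset ?card_ord // => i j [] /val_inj. Qed.

Lemma MaxPhi_uniform (phi : objective R) (g x : R) (m : nat) : 0 <= g ->
  (forall S, phi _ uniform_reward uniform_cost S = g * #|S|%:R) ->
  (m <= k)%N -> m%:R * beta <= x ->
  (forall j : nat, (j <= k)%N -> j%:R * beta <= x -> (j <= m)%N) ->
  MaxPhi phi uniform_reward uniform_cost x = g * m%:R.
Proof.
move=> g_ge0 phiE m_le_k m_fits maximal; apply/eqP; rewrite eq_le; apply/andP; split.
  apply: bigmax_le => [|S]; first by rewrite phiE cards0 mulr0 mulr_ge0.
  rewrite phiE price_uniform lee_fin => S_fits.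
  by rewrite ler_wpM2l // ler_nat maximal // -[X in (_ <= X)%N]card_ord max_card.
rewrite -(card_ord_prefix m_le_k) -phiE; apply: le_bigmax_cond.
by rewrite price_uniform card_ord_prefix lee_fin.
Qed.

Lemma uniform_PoF_value (phi : objective R) (g b B : R) (n : nat) : 0 < g ->
  (forall S, phi _ uniform_reward uniform_cost S = g * #|S|%:R) ->
  b / 2 < beta -> beta <= b -> k%:R * beta <= B -> (k <= n)%N ->
  PoF_values phi n b B k%:R.
Proof.
move=> g_gt0 phiE beta_gt beta_le_b k_fits k_le_n.
have [f_unit f_mono f_sub] := uniform_reward_valid.
have Mb : MaxPhi phi uniform_reward uniform_cost b = g.
  rewrite (MaxPhi_uniform (m := 1) (ltW g_gt0) phiE) ?mulr1 ?mul1r // => j _ j_fits.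
  rewrite leqNgt; apply/negP => j_ge2.
  have : 2 * beta <= j%:R * beta by rewrite ler_pM2r // (ler_nat R 2).
  lra.
have MB : MaxPhi phi uniform_reward uniform_cost B = g * k%:R.
  by rewrite (MaxPhi_uniform (m := k) (ltW g_gt0) phiE).
exists 'I_k, uniform_reward, uniform_cost; split; first by split; rewrite ?card_ord.
split.
- by move=> i; rewrite divr_ge0 ?ler0n ?ltW.
- by move=> i; rewrite price_uniform cards1 mul1r lee_fin.
- by rewrite Mb.
- by rewrite MB Mb mulrC mulKf ?(gt_eqF g_gt0).
Qed.

Lemma welfare_uniform S :
  welfare uniform_reward uniform_cost S = (1 - beta) / k%:R * #|S|%:R.
Proof. by rewrite /welfare /uniform_reward /uniform_cost sumr_const -mulr_natl; ring. Qed.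

End UniformInstance.

Lemma exists_uniform_cost (R : realFieldType) (k : nat) (b B : R) :
  0 < b -> (0 < k)%N -> k%:R * b < 2 * B -> b <= 1 ->
  exists beta, [/\ b / 2 < beta, beta <= b, k%:R * beta <= B & beta < 1].
Proof.
move=> b_gt0 k_gt0 k_pairs b_le1.
have k_gt0R : 0 < k%:R :> R by rewrite ltr0n.
pose top := Num.min b (B / k%:R).
have top_le_b : top <= b by rewrite ge_min lexx.
have top_fits : k%:R * top <= B by rewrite mulrC -ler_pdivlMr // ge_min lexx orbT.
have half_lt_top : b / 2 < top by rewrite lt_min ltr_pdivlMr //; lra.
by exists ((b / 2 + top) / 2); split; lra.
Qed.

Lemma is_sup_attained (R : realType) (X : R -> Prop) (v : R) :
  (forall r, X r -> r <= v) -> X v -> is_sup X v.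
Proof. by move=> ub Xv; split=> // w w_lt; exists v. Qed.

Theorem mainTheorem11 (R : realType) (b B : R) (n : nat) :
  0 < b -> b <= B -> B <= 1 -> (1 <= n)%N ->
  let v : R := Num.min ((Num.ceil (2 * B / b) - 1)%:~R) n%:R in
  [/\ is_sup (PoF_values (@reward R) n b B) v,
      is_sup (PoF_values (@welfare R) n b B) v &
      v <= Num.min (2 * B / b) n%:R].
Proof.
move=> b_gt0 b_le_B B_le1 n_ge1 v.
have [k k_gt0 [k_le_n kE k_pairs]] := pof_bound_nat b_gt0 b_le_B n_ge1.
have [beta [beta_gt beta_le_b k_fits beta_lt1]] :=
  exists_uniform_cost b_gt0 k_gt0 k_pairs (le_trans b_le_B B_le1).
have beta_gt0 : 0 < beta by lra.
have -> : v = k%:R by rewrite kE.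
split; [apply: is_sup_attained|apply: is_sup_attained|by rewrite kE pof_bound_le].
- by rewrite kE; apply: PoF_values_le_pof_bound => // A f c;
    [exact: submodular_diminishing_returns | case/(_ set0)/andP].
- apply: (uniform_PoF_value (g := k%:R^-1) k_gt0 beta_gt0) => //; first by rewrite invr_gt0 ltr0n.
  by move=> S; rewrite /reward /uniform_reward mulrC.
- rewrite kE; apply: PoF_values_le_pof_bound => // A f c.
    by move/submodular_diminishing_returns; exact: diminishing_returnsB_modular.
  by rewrite /welfare big_set0 subr0; case/(_ set0)/andP.
- apply: (uniform_PoF_value (g := (1 - beta) / k%:R) k_gt0 beta_gt0) => //.
    by rewrite divr_gt0 ?ltr0n //; lra.
  exact: welfare_uniform.
Qed.
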